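(* Let $w_0,w_1,w_2,\dots$ be complex numbers. If $f\in L^2([0,1])$ satisfies $\int_0^1x^nf(x)\,dx=w_n$ for all $n\ge0$, then $Uf\in H^2$ satisfies $Uf(\frac{n}{n+1})=(n+1)w_n$ for all $n\ge0$. If $h\in H^2$ satisfies $h(\frac{n}{n+1})=w_n$ for all $n\ge0$, then $U^*h\in L^2([0,1])$ satisfies $\int_0^1x^n\,U^*h(x)\,dx=\frac{1}{n+1}w_n$ for all $n\ge0$.
   Context: $H^2$ is the Hardy space of the unit disc $\mathbb{D}$, with Szegő kernel $k_\alpha(z)=\frac{1}{1-\bar\alpha z}$. The Sarason transform $U$ is the unique unitary operator from $L^2([0,1])$ onto $H^2$ with $U(x^n)=\frac{1}{n+1}k_{\frac{n}{n+1}}$ for all integers $n\ge0$. *)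

From HB Require Import structures.
From mathcomp Require Import all_boot all_order all_algebra.
From mathcomp Require Import all_classical all_reals all_analysis.
From mathcomp Require Import complex.
Set Implicit Arguments. Unset Strict Implicit. Unset Printing Implicit Defensive.
Import Order.TTheory GRing.Theory Num.Theory numFieldNormedType.Exports.
Local Open Scope classical_set_scope.
Local Open Scope ring_scope.
Local Open Scope complex_scope.

Section Sarason.
Variable R : realType.

Definition cre (z : R[i]) : R := complex.Re z.
Definition cim (z : R[i]) : R := complex.Im z.
Definition cnormsq (z : R[i]) : R := cre z ^+ 2 + cim z ^+ 2.
Definition cmk (a b : R) : R[i] := a +i* b.

Definition unit_itv : set R := `[0%R, 1%R].

Definition sq_int (g : R -> R) : Prop :=
  measurable_fun unit_itv g /\
  (@lebesgue_measure R).-integrable unit_itv (fun x => (g x ^+ 2)%:E).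

Definition L2 (f : R -> R[i]) : Prop :=
  sq_int (fun x => cre (f x)) /\ sq_int (fun x => cim (f x)).

Definition cint (f : R -> R[i]) : R[i] :=
  cmk (Rintegral (@lebesgue_measure R) unit_itv (fun x => cre (f x)))
      (Rintegral (@lebesgue_measure R) unit_itv (fun x => cim (f x))).

Definition L2inner (f g : R -> R[i]) : R[i] := cint (fun x => f x * (g x)^*).

Definition mono (n : nat) : R -> R[i] := fun x => cmk (x ^+ n) 0.

(* ----- H^2 of the disc, represented by Taylor coefficients ----- *)
Definition H2 (a : nat -> R[i]) : Prop :=
  cvgn ((series (fun k => cnormsq (a k))) : R^nat).

Definition csum (u : nat -> R[i]) : R[i] :=
  cmk (limn (series (fun k => cre (u k)))) (limn (series (fun k => cim (u k)))).

Definition H2inner (a b : nat -> R[i]) : R[i] := csum (fun k => a k * (b k)^*).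

Definition H2eval (a : nat -> R[i]) (z : R[i]) : R[i] := csum (fun k => a k * z ^+ k).

(* Szego kernel k_alpha(z) = 1/(1 - conj(alpha) z) = \sum_k conj(alpha)^k z^k *)
Definition szego (alpha : R[i]) : nat -> R[i] := fun k => (alpha^*) ^+ k.

Definition pt (n : nat) : R[i] := (n%:R / n.+1%:R).

(* U : L^2([0,1]) -> H^2 is the Sarason transform: linear, unitary
   (maps L^2 into H^2, preserves inner products, onto H^2), and
   U(x^n) = 1/(n+1) k_{n/(n+1)}.  Such U is unique. *)
Definition sarason_transform (U : (R -> R[i]) -> (nat -> R[i])) : Prop :=
  [/\ (forall f, L2 f -> H2 (U f)),
      (forall f g, L2 f -> L2 g -> U (fun x => f x + g x) = (fun k => U f k + U g k)),
      (forall (c : R[i]) f, L2 f -> U (fun x => c * f x) = (fun k => c * U f k)),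
      (forall f g, L2 f -> L2 g -> H2inner (U f) (U g) = L2inner f g) &
      (forall h, H2 h -> exists2 f, L2 f & U f = h) /\
      (forall n : nat, U (mono n) = (fun k => (n.+1%:R)^-1 * szego (pt n) k))].

Definition adjoint_of (U : (R -> R[i]) -> (nat -> R[i]))
    (Ustar : (nat -> R[i]) -> (R -> R[i])) : Prop :=
  (forall h, H2 h -> L2 (Ustar h)) /\
  (forall f h, L2 f -> H2 h -> H2inner (U f) h = L2inner f (Ustar h)).

End Sarason.

(* U(x^n) is the real multiple 1/(n+1) of the Szego kernel at the real point
   n/(n+1), and <h, k_alpha> = h(alpha).  Hence the identities
   <Uf, U x^n> = <f, x^n> and <h, U x^n> = <U^* h, x^n> read
   h(n/(n+1)) / (n+1) = \int_0^1 x^n g(x) dx for h = Uf, g = f and for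
   g = U^* h respectively. *)

From HB Require Import structures.
From mathcomp Require Import all_boot all_order all_algebra.
From mathcomp Require Import all_classical all_reals all_analysis.
From mathcomp Require Import complex.
From mathcomp Require Import measurable_realfun lebesgue_integral_differentiation.
Import Order.TTheory GRing.Theory Num.Theory numFieldNormedType.Exports.
Local Open Scope classical_set_scope.
Local Open Scope complex_scope.
(* Opened last so that [x^*] is [Num.conj], as in [H2inner] and [L2inner]. *)
Local Open Scope ring_scope.

Section real_limits_and_integrals.
Variable R : realType.

(* Holds also for divergent [s], where both limits are junk values. *)
Lemma limnZ (c : R) (s : R^nat) : limn (c *: s) = c *: limn s.
Proof.
have [->|c0] := eqVneq c 0; first by rewrite !scale0r; exact: lim_cst.
have [cs|ncs] := pselect (cvgn s); first exact: limZl_tmp.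
have ncs' : ~ cvgn (c *: s) by rewrite is_cvgZlE.
by rewrite (dvgP ncs') (dvgP ncs) [point]/= scaler0.
Qed.

Lemma RintegralN (D : set R) (f : R -> R) :
  Rintegral (@lebesgue_measure R) D (fun x => - f x) =
  - Rintegral (@lebesgue_measure R) D f.
Proof.
rewrite /Rintegral [X in fine X]integralE [X in - fine X]integralE.
rewrite (_ : (fun x => (- f x)%:E) = (\- (fun x => (f x)%:E))%E); last first.
  by apply/funext => x; rewrite EFinN.
rewrite funeposN funenegN.
have := @integral_ge0 _ _ _ (@lebesgue_measure R) D _
  (fun x _ => funepos_ge0 (fun x => (f x)%:E) x).
have := @integral_ge0 _ _ _ (@lebesgue_measure R) D _
  (fun x _ => funeneg_ge0 (fun x => (f x)%:E) x).
move: (integral _ _ _) (integral _ _ _) => [a| |] [b| |] //= _ _;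
  by rewrite ?opprB ?oppr0.
Qed.

End real_limits_and_integrals.

Section complex_sums_and_integrals.
Variable R : realType.

Lemma csumZ (r : R) (u : nat -> R[i]) :
  csum (fun k => r%:C * u k) = r%:C * csum u.
Proof.
rewrite /csum /cmk /cre /cim.
rewrite (_ : (fun k => complex.Re _) = r *: (fun k => complex.Re (u k))); last first.
  apply: funext => k; rewrite -[RHS]/(r * complex.Re (u k)).
  by case: (u k) => a b; rewrite /= mul0r subr0.
rewrite (_ : (fun k => complex.Im _) = r *: (fun k => complex.Im (u k))); last first.
  apply: funext => k; rewrite -[RHS]/(r * complex.Im (u k)).
  by case: (u k) => a b; rewrite /= mul0r addr0.
rewrite !seriesZ !limnZ.
by apply/eqP; rewrite eq_complex /= !mul0r subr0 addr0 !eqxx.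
Qed.

Lemma csum_conj (u : nat -> R[i]) : csum (fun k => (u k)^*) = (csum u)^*.
Proof.
rewrite /csum /cmk /cre /cim.
rewrite (_ : (fun k => complex.Re _) = fun k => complex.Re (u k)); last first.
  by apply: funext => k; case: (u k).
rewrite (_ : (fun k => complex.Im _) = - (fun k => complex.Im (u k))); last first.
  by apply: funext => k; rewrite -[RHS]/(- complex.Im (u k)); case: (u k).
by rewrite seriesN -scaleN1r limnZ scaleN1r.
Qed.

Lemma cint_conj (F : R -> R[i]) : cint (fun x => (F x)^*) = (cint F)^*.
Proof.
rewrite /cint /cmk /cre /cim.
rewrite (_ : (fun x => complex.Re _) = fun x => complex.Re (F x)); last first.
  by apply: funext => x; case: (F x).
rewrite (_ : (fun x => complex.Im _) = fun x => - complex.Im (F x)); last first.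
  by apply: funext => x; case: (F x).
by rewrite RintegralN.
Qed.

End complex_sums_and_integrals.

Section inner_products.
Variable R : realType.

Lemma conjCM (x y : R[i]) : (x * y)^* = x^* * y^*.
Proof. exact: rmorphM. Qed.

Lemma conjCX (x : R[i]) n : (x ^+ n)^* = x^* ^+ n.
Proof. exact: rmorphXn. Qed.

Lemma conjC_realC (r : R) : (r%:C)^* = r%:C.
Proof. exact: conjc_real. Qed.

Lemma invr_natC n : (n%:R^-1 : R[i]) = (n%:R^-1 : R)%:C.
Proof. by rewrite fmorphV rmorph_nat. Qed.

Lemma H2inner_conj (a b : nat -> R[i]) : H2inner b a = (H2inner a b)^*.
Proof.
rewrite /H2inner -csum_conj; congr csum; apply/funext => k.
by rewrite conjCM conjCK mulrC.
Qed.

Lemma H2innerZr (r : R) (a b : nat -> R[i]) :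
  H2inner a (fun k => r%:C * b k) = r%:C * H2inner a b.
Proof.
rewrite /H2inner -csumZ; congr csum; apply/funext => k.
by rewrite conjCM conjC_realC mulrCA.
Qed.

Lemma H2inner_szego (a : nat -> R[i]) (alpha : R[i]) :
  H2inner a (szego alpha) = H2eval a alpha.
Proof. by rewrite /H2inner /szego; under eq_fun do rewrite conjCX conjCK. Qed.

Lemma L2inner_conj (f g : R -> R[i]) : L2inner g f = (L2inner f g)^*.
Proof.
rewrite /L2inner -cint_conj; congr cint; apply/funext => x.
by rewrite conjCM conjCK mulrC.
Qed.

Lemma L2inner_mono (f : R -> R[i]) n :
  L2inner f (mono n) = cint (fun x => mono n x * f x).
Proof.
by rewrite /L2inner; under eq_fun do rewrite conjC_realC mulrC.
Qed.

Lemma L2_mono n : L2 (@mono R n).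
Proof.
have sq_int_continuous (g : R -> R) : continuous g -> sq_int g.
  move=> cg; split.
    by apply: measurable_funTS; exact: continuous_measurable_fun.
  apply: (continuous_compact_integrable (f := fun x => g x ^+ 2)).
    exact: segment_compact.
  apply: continuous_subspaceT => x.
  exact: continuous_comp (cg x) (@exprn_continuous R 2 _).
split; apply: sq_int_continuous => x; last exact: cvg_cst.
exact: exprn_continuous.
Qed.

End inner_products.

Theorem proposition2p2 (R : realType)
    (U : (R -> R[i]) -> (nat -> R[i])) (Ustar : (nat -> R[i]) -> (R -> R[i]))
    (hU : sarason_transform U) (hUs : adjoint_of U Ustar) (w : nat -> R[i]) :
  (forall f : R -> R[i], L2 f ->
     (forall n : nat, cint (fun x => mono n x * f x) = w n) ->
     forall n : nat, H2eval (U f) (pt R n) = n.+1%:R * w n) /\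
  (forall h : nat -> R[i], H2 h ->
     (forall n : nat, H2eval h (pt R n) = w n) ->
     forall n : nat, cint (fun x => mono n x * Ustar h x) = (n.+1%:R)^-1 * w n).
Proof.
case: hU => _ _ _ U_isometry [_ U_mono]; case: hUs => _ Ustar_adjoint.
split=> [f Lf f_moments n | h Hh h_values n].
- have := U_isometry f _ Lf (L2_mono R n).
  rewrite U_mono invr_natC H2innerZr H2inner_szego L2inner_mono f_moments => <-.
  by rewrite -invr_natC mulrA mulfV ?mul1r // pnatr_eq0.
- have := congr1 Num.conj (Ustar_adjoint _ h (L2_mono R n) Hh).
  rewrite -H2inner_conj -L2inner_conj L2inner_mono => <-.
  by rewrite U_mono invr_natC H2innerZr H2inner_szego h_values.
Qed.
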